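(* Consider the liquid democracy game with complete information about types. Let $n_A,n_B$ be the numbers of partisans for $A$ and for $B$, $n_e$ the number of independent voters with precision $q_i=1$, and $n_U$ the number of independent voters with precision $q_i<1$. Suppose $n_e\ge 1$, $n_U\ge n_e+|n_A-n_B|+1$, and $\max(n_e+n_A,\ n_e+n_B)\le N/2$. Then the election game with delegation is dominance solvable (by iterated elimination of weakly dominated strategies), and the dominance-solvable outcome is the efficient outcome.
   Context: Voters $\mathcal N=\{1,\dots,N\}$ choose between alternatives $A$ and $B$ by simple majority of votes cast, ties broken uniformly at random. Unknown state $\omega\in\{a,b\}$ with common prior $\Pr(\omega=a)=\pi\in(0,1)$. Each voter $i$ has preference $p_i\in\{A,B,I\}$ and precision $q_i\in[1/2,1]$, commonly known. An independent ($p_i=I$) gets payoff 1 if the outcome matches the state ($A$ with $a$, $B$ with $b$), else 0; a partisan with $p_i=A$ (resp. $B$) gets 1 iff the outcome is $A$ (resp. $B$). Voter $i$ observes a private signal $s_i\in\{a,b\}$ with $\Pr(s_i=\omega\mid\omega)=q_i$, conditionally independent. In liquid democracy a (pure) strategy of voter $i$ maps her signal to one of: vote for $A$, vote for $B$, abstain, or delegate to another voter $j$; delegation is transitive, votes held by voters in a delegation cycle are abstained, and a non-delegating voter casts all votes she holds (own plus delegated) for the same alternative or abstains them all. The efficient outcome is the one maximizing the probability that the election outcome matches the state. *)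

From mathcomp Require Import all_boot all_order all_algebra.
Set Implicit Arguments. Unset Strict Implicit. Unset Printing Implicit Defensive.
Import Order.TTheory GRing.Theory Num.Theory.
Local Open Scope ring_scope.

(* Voter preferences: partisan for A, partisan for B, independent. *)
Inductive pref := PA | PB | PI.

(* Actions of a voter among N voters:
   inl (Some true)  = vote for A,
   inl (Some false) = vote for B,
   inl None         = abstain,
   inr j            = delegate to voter j. *)
Definition action (N : nat) := (option bool + 'I_N)%type.

(* Signals / states are booleans: true = a, false = b.
   A pure strategy maps the private signal to an action. *)
Definition strat (N : nat) := {ffun bool -> action N}.

Definition valid_strat (N : nat) (i : 'I_N) (x : strat N) : Prop :=
  forall (s : bool) (j : 'I_N), x s = inr j -> j != i.

(* After N steps along the delegation
   chain from i, either we reached a non-delegating voter (who casts all the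
   votes she holds), or we are still delegating, i.e. in a cycle (abstained). *)
Definition dnext (N : nat) (act : 'I_N -> action N) (j : 'I_N) : 'I_N :=
  match act j with inr k => k | inl _ => j end.

Definition final_vote (N : nat) (act : 'I_N -> action N) (i : 'I_N) : option bool :=
  match act (iter N (dnext act) i) with inl v => v | inr _ => None end.

Definition votesA (N : nat) (act : 'I_N -> action N) : nat :=
  #|[pred i | final_vote act i == Some true]|.
Definition votesB (N : nat) (act : 'I_N -> action N) : nat :=
  #|[pred i | final_vote act i == Some false]|.

(* Probability that the outcome is A: simple majority of votes cast,
   ties broken uniformly at random. *)
Definition probA (R : realFieldType) (N : nat) (act : 'I_N -> action N) : R :=
  if (votesB act < votesA act)%N then 1
  else if votesA act == votesB act then 2^-1 else 0.

Definition profile (N : nat) := 'I_N -> strat N.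

Definition act_of (N : nat) (sigma : profile N) (s : {ffun 'I_N -> bool}) :
  'I_N -> action N := fun i => sigma i (s i).

Definition prior (R : realFieldType) (pi : R) (w : bool) : R :=
  if w then pi else 1 - pi.

Definition sig_prob (R : realFieldType) (N : nat) (q : 'I_N -> R) (w : bool)
  (s : {ffun 'I_N -> bool}) : R :=
  \prod_(i < N) (if s i == w then q i else 1 - q i).

Definition utility (R : realFieldType) (x : pref) (w : bool) (pA : R) : R :=
  match x with
  | PA => pA
  | PB => 1 - pA
  | PI => if w then pA else 1 - pA
  end.

Definition expected (R : realFieldType) (N : nat) (pi : R) (q : 'I_N -> R)
  (u : bool -> R -> R) (sigma : profile N) : R :=
  \sum_(w : bool) \sum_(s : {ffun 'I_N -> bool})
     prior pi w * sig_prob q w s * u w (probA R (act_of sigma s)).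

Definition EU (R : realFieldType) (N : nat) (pi : R) (p : 'I_N -> pref)
  (q : 'I_N -> R) (i : 'I_N) (sigma : profile N) : R :=
  expected pi q (utility (p i)) sigma.

Definition prcorrect (R : realFieldType) (N : nat) (pi : R) (q : 'I_N -> R)
  (sigma : profile N) : R :=
  expected pi q (utility PI) sigma.

Definition upd (N : nat) (sigma : profile N) (i : 'I_N) (y : strat N) : profile N :=
  fun j => if j == i then y else sigma j.

(* A restriction of the game: a set of remaining strategies per voter. *)
Definition restr (N : nat) := 'I_N -> strat N -> Prop.

Definition in_restr (N : nat) (S : restr N) (sigma : profile N) : Prop :=
  forall j, S j (sigma j).

Definition wdominated (R : realFieldType) (N : nat) (pi : R) (p : 'I_N -> pref)
  (q : 'I_N -> R) (S : restr N) (i : 'I_N) (x : strat N) : Prop :=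
  exists y, S i y /\
    (forall sigma, in_restr S sigma ->
        EU pi p q i (upd sigma i x) <= EU pi p q i (upd sigma i y)) /\
    (exists sigma, in_restr S sigma /\
        EU pi p q i (upd sigma i x) < EU pi p q i (upd sigma i y)).

Definition elim_step (R : realFieldType) (N : nat) (pi : R) (p : 'I_N -> pref)
  (q : 'I_N -> R) (S : restr N) : restr N :=
  fun i x => S i x /\ ~ wdominated pi p q S i x.

Definition valid_restr (N : nat) : restr N := fun i x => valid_strat i x.

Definition surviving (R : realFieldType) (N : nat) (pi : R) (p : 'I_N -> pref)
  (q : 'I_N -> R) : restr N :=
  fun i x => forall k, iter k (elim_step pi p q) (@valid_restr N) i x.

(* Dominance solvability (Moulin): the surviving set is nonempty and every
   player is indifferent among all surviving profiles. *)
Definition dominance_solvable (R : realFieldType) (N : nat) (pi : R)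
  (p : 'I_N -> pref) (q : 'I_N -> R) : Prop :=
  (exists sigma, in_restr (surviving pi p q) sigma) /\
  (forall i sigma tau, in_restr (surviving pi p q) sigma ->
      in_restr (surviving pi p q) tau -> EU pi p q i sigma = EU pi p q i tau).

Definition efficient (R : realFieldType) (N : nat) (pi : R) (q : 'I_N -> R)
  (sigma : profile N) : Prop :=
  forall tau, in_restr (@valid_restr N) tau -> prcorrect pi q tau <= prcorrect pi q sigma.

Definition nA (N : nat) (p : 'I_N -> pref) : nat :=
  #|[pred i | if p i is PA then true else false]|.
Definition nB (N : nat) (p : 'I_N -> pref) : nat :=
  #|[pred i | if p i is PB then true else false]|.
Definition nE (R : realFieldType) (N : nat) (p : 'I_N -> pref) (q : 'I_N -> R) : nat :=
  #|[pred i | if p i is PI then q i == 1 else false]|.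
Definition nU (R : realFieldType) (N : nat) (p : 'I_N -> pref) (q : 'I_N -> R) : nat :=
  #|[pred i | if p i is PI then q i < 1 else false]|.

From mathcomp Require Import all_boot all_order all_algebra.
From mathcomp Require Import zify.
From Stdlib Require Import FunctionalExtensionality.
Set Implicit Arguments. Unset Strict Implicit. Unset Printing Implicit Defensive.
Import Order.TTheory GRing.Theory Num.Theory.
Local Open Scope ring_scope.

(* Let partisans vote for their side, experts (independents of precision 1) vote
   their signal, and uninformed independents delegate to a fixed expert [e0]; call
   this profile [sol].  Partisans and experts cannot do better than [sol] against
   any profile, and do strictly worse with any other strategy against some
   profile, so the first round of elimination leaves them only [sol]; in
   particular [e0] then votes her signal, which is correct.  Against such
   profiles delegating to [e0] is a best reply for an uninformed voter, so [sol]
   survives every round, and any other surviving strategy of hers is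
   payoff-equivalent to it.  Replacing surviving strategies by [sol] one voter at
   a time therefore preserves the probability of a correct outcome, and under
   [sol] every independent votes for the state while each group of partisans is
   a minority: surviving profiles elect the correct alternative with
   probability 1, which makes them efficient and all players indifferent among
   them. *)

Lemma iter_card_fix (N : nat) (f : 'I_N -> 'I_N) t k z :
  iter t f k = z -> f z = z -> iter N f k = z.
Proof.
move=> Hkz fz; have kz : fconnect f k z by rewrite -Hkz fconnect_iter.
have le_idx_N : (findex f k z <= N)%N.
  apply/ltnW/(leq_trans (findex_max kz)).
  by rewrite -[leqRHS]card_ord max_card.
have -> : iter N f k = iter (N - findex f k z) f (iter (findex f k z) f k).
  by rewrite -iterD subnK.
by rewrite (iter_findex kz) iter_fix.
Qed.

Section FinalVote.
Variables (N : nat) (act : 'I_N -> action N).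

Lemma final_vote_inl j v : act j = inl v -> final_vote act j = v.
Proof.
move=> Hj; rewrite /final_vote (@iter_card_fix _ _ 0 j j) ?Hj //.
by rewrite /dnext Hj.
Qed.

Lemma final_vote_inr j m v : act j = inr m -> act m = inl v -> final_vote act j = v.
Proof.
move=> Hj Hm; rewrite /final_vote (@iter_card_fix _ _ 1 j m) ?Hm //.
  by rewrite /= /dnext Hj.
by rewrite /dnext Hm.
Qed.

End FinalVote.

(* A change of [i]'s action after which [i]'s delegation chain ends at a voter
   casting [v] can only turn final votes into [v]: a chain either avoids [i],
   and is unchanged, or passes through [i], and then ends where [i]'s does. *)
Lemma final_vote_update N (act1 act2 : 'I_N -> action N) i z v t :
  (forall j, j != i -> act2 j = act1 j) ->
  iter t (dnext act2) i = z -> act2 z = inl v ->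
  forall k, final_vote act2 k = final_vote act1 k \/ final_vote act2 k = v.
Proof.
move=> Hoff Hiz Hz k.
have fz : dnext act2 z = z by rewrite /dnext Hz.
case: (boolP [exists t' : 'I_N.+1, iter t' (dnext act2) k == i]).
  case/existsP=> t' /eqP Hki; right.
  by rewrite /final_vote (@iter_card_fix _ _ (t + t') k z) ?Hz // iterD Hki.
rewrite negb_exists => /forallP avoid_i; left.
have Hne n : (n <= N)%N -> iter n (dnext act2) k != i.
  by move=> leN; exact: (avoid_i (Ordinal (leN : (n < N.+1)%N))).
have Heq n : (n <= N)%N -> iter n (dnext act2) k = iter n (dnext act1) k.
  elim: n => [//|n IH] leN; rewrite !iterS -IH ?(ltnW leN) //.
  by rewrite /dnext Hoff // Hne // ltnW.
by rewrite /final_vote Heq // Hoff // -Heq // Hne.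
Qed.

Definition votes N (act : 'I_N -> action N) (c : bool) : nat :=
  #|[pred k | final_vote act k == Some c]|.

Definition maj_prob (R : realFieldType) (a b : nat) : R :=
  if (b < a)%N then 1 else if a == b then 2^-1 else 0.

Definition pr_win (R : realFieldType) N (act : 'I_N -> action N) (c : bool) : R :=
  maj_prob R (votes act c) (votes act (~~ c)).

Definition favoured (x : pref) (w : bool) : bool :=
  match x with PA => true | PB => false | PI => w end.

Section MajorityProbability.
Variable R : realFieldType.
Implicit Types a b : nat.

Lemma half_gt0 : (0 : R) < 2^-1.
Proof. by rewrite invr_gt0 ltr0n. Qed.

Lemma half_lt1 : (2^-1 : R) < 1.
Proof. by rewrite invf_lt1 // ltr1n. Qed.

Lemma maj_probC a b : 1 - maj_prob R a b = maj_prob R b a.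
Proof.
rewrite /maj_prob eq_sym; case: ltngtP => _ /=; rewrite ?subrr ?subr0 //.
by rewrite {1}(splitr 1) mul1r addrK.
Qed.

Lemma maj_prob_ge0 a b : 0 <= maj_prob R a b.
Proof.
rewrite /maj_prob; case: ifP => _; last case: ifP => _;
  by rewrite ?ler01 ?lexx ?ltW ?half_gt0.
Qed.

Lemma maj_prob_le1 a b : maj_prob R a b <= 1.
Proof. by rewrite -subr_ge0 maj_probC maj_prob_ge0. Qed.

Lemma maj_prob_win a b : (b < a)%N -> maj_prob R a b = 1.
Proof. by rewrite /maj_prob => ->. Qed.

Lemma maj_prob_le_half a b : (a <= b)%N -> maj_prob R a b <= 2^-1.
Proof.
rewrite /maj_prob leqNgt => /negbTE ->.
by case: ifP; rewrite ?lexx ?ltW ?half_gt0.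
Qed.

Lemma maj_prob_mono a1 a2 b1 b2 :
  (a1 <= a2)%N -> (b2 <= b1)%N -> maj_prob R a1 b1 <= maj_prob R a2 b2.
Proof.
move=> le_a le_b; rewrite {2}/maj_prob.
case: ltnP => [_|le_a2]; first exact: maj_prob_le1.
have [eq2|ne2] := eqVneq a2 b2; last first.
  by rewrite /maj_prob ifF ?ifF //; apply/negbTE; [apply/eqP | rewrite -leqNgt]; lia.
by apply: maj_prob_le_half; lia.
Qed.

End MajorityProbability.

Section WinProbability.
Variables (R : realFieldType) (N : nat).
Implicit Types act : 'I_N -> action N.

Lemma utility_pr_win x w act :
  utility x w (probA R act) = pr_win R act (favoured x w).
Proof.
have probA_true : probA R act = pr_win R act true by [].
by case: x => //=; case: w => //=; rewrite probA_true maj_probC.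
Qed.

Lemma pr_win_le1 act c : pr_win R act c <= 1.
Proof. exact: maj_prob_le1. Qed.

Lemma pr_win_negb act c : pr_win R act (~~ c) = 1 - pr_win R act c.
Proof. by rewrite /pr_win maj_probC negbK. Qed.

Lemma pr_win_majority act c :
  (votes act (~~ c) < votes act c)%N -> pr_win R act c = 1.
Proof. exact: maj_prob_win. Qed.

Lemma pr_win_le_half act c :
  (votes act c <= votes act (~~ c))%N -> pr_win R act c <= 2^-1.
Proof. exact: maj_prob_le_half. Qed.

Lemma pr_win_mono act1 act2 c :
  (forall k, final_vote act2 k = final_vote act1 k \/ final_vote act2 k = Some c) ->
  pr_win R act1 c <= pr_win R act2 c.
Proof.
move=> Hk; apply: maj_prob_mono; apply: subset_leq_card; apply/subsetP => k;
  rewrite !inE /= => /eqP Hv; case: (Hk k) Hv => -> Hv; rewrite ?Hv ?eqxx //.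
by case: c {Hk} Hv.
Qed.

End WinProbability.

Section Signals.
Variables (R : realFieldType) (N : nat) (pi : R) (q : 'I_N -> R).
Implicit Types (w : bool) (s : {ffun 'I_N -> bool}) (sigma tau : profile N).

Definition weight w s : R := prior pi w * sig_prob q w s.

Lemma sig_prob_sum w : \sum_s sig_prob q w s = 1.
Proof.
rewrite /sig_prob -(bigA_distr_bigA (fun i (b : bool) => if b == w then q i else 1 - q i)).
by apply: big1 => i _; rewrite big_bool; case: w => /=; rewrite ?subrK // addrC subrK.
Qed.

Lemma weight_sum : \sum_w \sum_s weight w s = 1.
Proof.
rewrite big_bool /weight -!mulr_sumr !sig_prob_sum !mulr1 /=.
by rewrite addrC subrK.
Qed.

Lemma weight_informed w s j : weight w s != 0 -> q j = 1 -> s j = w.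
Proof.
rewrite /weight mulf_eq0 negb_or => /andP[_ Hs] qj1.
apply/eqP; apply: contraNT Hs => Hj; apply/prodf_eq0.
by exists j => //; rewrite (negbTE Hj) qj1 subrr.
Qed.

Hypothesis pi01 : 0 < pi < 1.
Hypothesis q01 : forall i, 0 < q i <= 1.

Lemma weight_ge0 w s : 0 <= weight w s.
Proof.
case/andP: pi01 => pi0 pi1; apply: mulr_ge0.
  by case: w => /=; rewrite ?subr_ge0 ltW.
apply: prodr_ge0 => i _; case/andP: (q01 i) => qi0 qi1.
by case: ifP => _; rewrite ?subr_ge0 // ltW.
Qed.

Lemma weight_gt0 w s : (forall i, s i != w -> q i < 1) -> 0 < weight w s.
Proof.
move=> qwrong; case/andP: pi01 => pi0 pi1; apply: mulr_gt0.
  by case: (w) => /=; rewrite ?subr_gt0.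
apply: prodr_gt0 => i _; case: eqP => [_|/eqP Hi]; first by case/andP: (q01 i).
by rewrite subr_gt0 qwrong.
Qed.

Lemma weighted_le u1 u2 w s :
  (weight w s != 0 -> u1 <= u2) -> weight w s * u1 <= weight w s * u2.
Proof.
have [->|Hw] := eqVneq (weight w s) 0; first by rewrite !mul0r.
by move=> le_u; rewrite ler_wpM2l ?weight_ge0 ?le_u.
Qed.

Lemma ler_expected u sigma tau :
  (forall w s, weight w s != 0 ->
     u w (probA R (act_of sigma s)) <= u w (probA R (act_of tau s))) ->
  expected pi q u sigma <= expected pi q u tau.
Proof.
move=> le_u; do 2![apply: ler_sum => ? _].
exact: weighted_le (le_u _ _).
Qed.

Lemma ltr_expected u sigma tau w0 s0 :
  (forall w s, weight w s != 0 ->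
     u w (probA R (act_of sigma s)) <= u w (probA R (act_of tau s))) ->
  0 < weight w0 s0 ->
  u w0 (probA R (act_of sigma s0)) < u w0 (probA R (act_of tau s0)) ->
  expected pi q u sigma < expected pi q u tau.
Proof.
move=> le_u w0_gt0 lt_u0.
rewrite /expected (bigD1 w0) //= [ltRHS](bigD1 w0) //=.
rewrite ltr_leD //; last by apply: ler_sum => w _; apply: ler_sum => s _;
  exact: weighted_le (le_u _ _).
rewrite (bigD1 s0) //= [ltRHS](bigD1 s0) //= ltr_leD //.
  by rewrite ltr_pM2l.
by apply: ler_sum => s _; exact: weighted_le (le_u _ _).
Qed.

Lemma prcorrect_le1 sigma : prcorrect pi q sigma <= 1.
Proof.
rewrite -weight_sum; do 2![apply: ler_sum => ? _].
by rewrite utility_pr_win ler_piMr ?weight_ge0 ?pr_win_le1.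
Qed.

(* [prcorrect] is a convex combination of winning probabilities, so it can only
   equal 1 if the state wins with probability 1 at every possible signal profile. *)
Lemma prcorrect1_win sigma w s : prcorrect pi q sigma = 1 ->
  weight w s != 0 -> pr_win R (act_of sigma s) w = 1.
Proof.
move=> prc1 Hw.
pose D w s := weight w s * (1 - pr_win R (act_of sigma s) w).
have D_ge0 w' s' : 0 <= D w' s'.
  by rewrite mulr_ge0 ?weight_ge0 // subr_ge0 pr_win_le1.
have D_sum : \sum_w \sum_s D w s = 0.
  under eq_bigr => w' _ do under eq_bigr => s' _ do
    rewrite /D mulrBr mulr1 -(utility_pr_win _ PI).
  under eq_bigr => w' _ do rewrite sumrB.
  by rewrite sumrB weight_sum; move: prc1; rewrite /prcorrect /expected => ->; rewrite subrr.
have Dw0 : \sum_s D w s = 0.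
  by apply: (psumr_eq0P _ D_sum) => // w' _; exact: sumr_ge0.
have /eqP : D w s = 0 by exact: (psumr_eq0P _ Dw0).
by rewrite mulf_eq0 (negbTE Hw) subr_eq0 => /eqP <-.
Qed.

Lemma prcorrect1_expected_eq x sigma tau :
  prcorrect pi q sigma = 1 -> prcorrect pi q tau = 1 ->
  expected pi q (utility x) sigma = expected pi q (utility x) tau.
Proof.
move=> prc_sigma prc_tau; apply: eq_bigr => w _; apply: eq_bigr => s _.
have [W0|Hw] := eqVneq (weight w s) 0; first by rewrite -/(weight w s) W0 !mul0r.
have win_fav (act : 'I_N -> action N) :
    pr_win R act w = 1 -> pr_win R act (favoured x w) = (favoured x w == w)%:R.
  move=> win; have [->|ne_w] := eqVneq (favoured x w) w; first by rewrite win.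
  have -> : favoured x w = ~~ w by move: ne_w; case: (favoured x w); case: (w).
  by rewrite pr_win_negb win subrr.
by rewrite !utility_pr_win !win_fav // (prcorrect1_win prc_sigma, prcorrect1_win prc_tau).
Qed.

End Signals.

Lemma ffun_neq_at (aT : finType) (rT : eqType) (f g : {ffun aT -> rT}) :
  f != g -> exists x, f x != g x.
Proof.
move=> ne_fg; apply/existsP; rewrite -negb_forall; apply: contra ne_fg.
by move=> /forallP eq_fg; apply/eqP/ffunP => x; apply/eqP.
Qed.

Lemma act_of_upd N (sigma : profile N) i y s j :
  act_of (upd sigma i y) s j = if j == i then y (s i) else sigma j (s j).
Proof. by rewrite /act_of /upd; case: eqP => // ->. Qed.

Lemma votes_others_direct N (act : 'I_N -> action N) i (v : 'I_N -> option bool) c :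
  (forall j, j != i -> act j = inl (v j)) ->
  votes act c = ((final_vote act i == Some c) + #|[pred j | (j != i) && (v j == Some c)]|)%N.
Proof.
move=> direct; rewrite /votes (cardD1 i) inE; congr (_ + _)%N.
apply: eq_card => j; rewrite !inE.
by case: eqVneq => //= Hj; rewrite (final_vote_inl (direct j Hj)).
Qed.

Section Game.
Variables (R : realFieldType) (N : nat) (pi : R) (p : 'I_N -> pref) (q : 'I_N -> R).
Hypothesis pi01 : 0 < pi < 1.
Hypothesis q01 : forall i, 0 < q i <= 1.
Variable e0 : 'I_N.
Hypothesis e0_PI : p e0 = PI.
Hypothesis e0_q1 : q e0 = 1.

Definition uninformed i := if p i is PI then q i < 1 else false.
Definition vote_favoured (x : pref) : strat N := [ffun w => inl (Some (favoured x w))].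
Definition delegate_to (j : 'I_N) : strat N := [ffun _ => inr j].
Definition sol : profile N :=
  fun i => if uninformed i then delegate_to e0 else vote_favoured (p i).

Lemma uninformed_PI i : uninformed i -> p i = PI.
Proof. by rewrite /uninformed; case: (p i). Qed.

Lemma uninformed_q i : uninformed i -> q i < 1.
Proof. by rewrite /uninformed; case: (p i). Qed.

Lemma informed_q1 i : ~~ uninformed i -> p i = PI -> q i = 1.
Proof.
rewrite /uninformed => + pi_PI; rewrite pi_PI -leNgt => q_ge1.
by apply/le_anti; rewrite q_ge1 andbT; case/andP: (q01 i).
Qed.

Lemma e0_informed : ~~ uninformed e0.
Proof. by rewrite /uninformed e0_PI e0_q1 ltxx. Qed.

Lemma uninformed_neq_e0 i : uninformed i -> i != e0.
Proof. by apply: contraTneq => ->; exact: e0_informed. Qed.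

Lemma sol_e0 : sol e0 = vote_favoured PI.
Proof. by rewrite /sol (negbTE e0_informed) e0_PI. Qed.

Lemma sol_valid i : valid_strat i (sol i).
Proof.
rewrite /sol; case: ifP => Ui b j; rewrite ffunE // => -[<-].
by rewrite eq_sym uninformed_neq_e0.
Qed.

Lemma sol_informed_vote i w s : ~~ uninformed i -> weight pi q w s != 0 ->
  sol i (s i) = inl (Some (favoured (p i) w)).
Proof.
move=> Ii Hw; rewrite /sol (negbTE Ii) ffunE.
by case E: (p i) => //=; rewrite (weight_informed Hw (informed_q1 Ii E)).
Qed.

(* Once the expert [e0] votes her (correct) signal, following [sol] makes [i]'s
   own favoured alternative the final vote of [i] and of everyone delegating to [i]. *)
Lemma sol_best_reply_at i (sigma : profile N) y w s :
  (uninformed i -> sigma e0 = vote_favoured PI) -> weight pi q w s != 0 ->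
  utility (p i) w (probA R (act_of (upd sigma i y) s)) <=
  utility (p i) w (probA R (act_of (upd sigma i (sol i)) s)).
Proof.
move=> e0_sincere Hw; rewrite !utility_pr_win; apply: pr_win_mono.
have off_i j : j != i -> act_of (upd sigma i (sol i)) s j = act_of (upd sigma i y) s j.
  by move=> Hj; rewrite !act_of_upd (negbTE Hj).
have [Ui|Ii] := boolP (uninformed i).
  have i_e0 : act_of (upd sigma i (sol i)) s i = inr e0 by rewrite act_of_upd eqxx /sol Ui ffunE.
  apply: (final_vote_update (t := 1) off_i); first by rewrite /= /dnext i_e0.
  rewrite act_of_upd eq_sym (negbTE (uninformed_neq_e0 Ui)) e0_sincere // ffunE.
  by rewrite (uninformed_PI Ui) (weight_informed Hw e0_q1).
apply: (final_vote_update (t := 0) off_i) => //.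
by rewrite act_of_upd eqxx (sol_informed_vote Ii Hw).
Qed.

Lemma sol_best_reply i (sigma : profile N) y :
  (uninformed i -> sigma e0 = vote_favoured PI) ->
  EU pi p q i (upd sigma i y) <= EU pi p q i (upd sigma i (sol i)).
Proof. by move=> e0_sincere; apply: (ler_expected pi01 q01) => w s; exact: sol_best_reply_at. Qed.

Lemma informed_strict_better i y : ~~ uninformed i -> valid_strat i y -> y != sol i ->
  exists sigma, in_restr (@valid_restr N) sigma /\
    EU pi p q i (upd sigma i y) < EU pi p q i (upd sigma i (sol i)).
Proof.
move=> Ii y_valid /ffun_neq_at[b y_b].
pose abstain : profile N := fun _ => [ffun _ => inl None].
exists abstain; split; first by move=> j b' j'; rewrite ffunE.
pose s0 := [ffun _ : 'I_N => b].
have s0_gt0 : 0 < weight pi q b s0 by apply: weight_gt0 => // j; rewrite ffunE eqxx.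
apply: (ltr_expected pi01 q01 _ s0_gt0).
  by move=> w s Hw; apply: sol_best_reply_at => // Ui; rewrite Ui in Ii.
set c := favoured (p i) b; rewrite !utility_pr_win -/c.
have sol_b : sol i b = inl (Some c).
  by have := sol_informed_vote Ii (lt0r_neq0 s0_gt0); rewrite ffunE.
have votesE y' c' : votes (act_of (upd abstain i y') s0) c' =
    (final_vote (act_of (upd abstain i y') s0) i == Some c') :> nat.
  rewrite (@votes_others_direct _ _ i (fun _ => None)) => [|j Hj].
    by rewrite (@eq_card0 _ [pred j | _]) ?addn0 // => j; rewrite !inE andbF.
  by rewrite act_of_upd (negbTE Hj) ffunE.
have fv_sol : final_vote (act_of (upd abstain i (sol i)) s0) i = Some c.
  by apply: final_vote_inl; rewrite act_of_upd eqxx ffunE.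
have fv_y : final_vote (act_of (upd abstain i y) s0) i != Some c.
  have y_i : act_of (upd abstain i y) s0 i = y b by rewrite act_of_upd eqxx ffunE.
  case E: (y b) y_i y_b => [v|j] y_i.
    by rewrite (final_vote_inl y_i) sol_b; apply: contra => /eqP ->.
  by rewrite (final_vote_inr (v := None) y_i) // act_of_upd (negbTE (y_valid _ _ E)) ffunE.
apply: (@le_lt_trans _ _ 2^-1); first by apply: pr_win_le_half; rewrite votesE (negbTE fv_y).
by rewrite pr_win_majority ?half_lt1 // !votesE fv_sol eqxx; case: (c).
Qed.

Hypothesis two_uninformed : (1 < nU p q)%N.

Lemma exists_other_uninformed i : exists2 k, uninformed k & k != i.
Proof.
have : (0 < #|[predD1 uninformed & i]|)%N.
  have nU_uninformed : nU p q = #|[pred j | uninformed j]| by [].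
  by move: two_uninformed; rewrite nU_uninformed (cardD1 i) inE; case: (uninformed i) => // /ltnW.
by case/card_gt0P => k; rewrite !inE => /andP[ki Uk]; exists k.
Qed.

Definition challenge (k : 'I_N) (c : bool) : profile N := fun j =>
  if j == e0 then vote_favoured PI else [ffun _ => inl (if j == k then Some c else None)].

Lemma challenge_valid k c : in_restr (@valid_restr N) (challenge k c).
Proof. by move=> j b j'; rewrite /challenge; case: ifP; rewrite ffunE. Qed.

Lemma votes_challenge i k c y (s : {ffun 'I_N -> bool}) c' :
  i != e0 -> k != i -> k != e0 -> s e0 = ~~ c ->
  votes (act_of (upd (challenge k c) i y) s) c' =
    ((final_vote (act_of (upd (challenge k c) i y) s) i == Some c') + 1)%N.
Proof.
move=> ie0 ki ke0 s_e0.
pose v j := if j == e0 then Some (~~ c) else if j == k then Some c else None.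
rewrite (@votes_others_direct _ _ i v) => [|j ji]; last first.
  rewrite act_of_upd (negbTE ji) /challenge /v; case: eqP => [->|_]; last by rewrite ffunE.
  by rewrite ffunE s_e0.
congr (_ + _)%N; rewrite -(card1 (if c' == c then k else e0)); apply: eq_card => j.
rewrite !inE /v; case: (eqVneq j e0) => [->|je0].
  by rewrite eq_sym ie0; case: (c') (c) => -[] /=; rewrite ?eqxx // (eq_sym e0) (negbTE ke0).
case: (eqVneq j k) => [->|jk].
  by rewrite ki; case: (c') (c) => -[] /=; rewrite ?eqxx // (negbTE ke0).
by rewrite andbF; case: ifP => _; rewrite ?(negbTE je0) ?(negbTE jk).
Qed.

(* Against the expert voting her signal and an uninformed [k] voting [c], the
   deviation [y] leaves the state [~~ c] one vote short, whereas delegating to the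
   expert gives it a majority. *)
Lemma uninformed_strict_better i y : uninformed i -> valid_strat i y -> y != sol i ->
  exists sigma, in_restr (@valid_restr N) sigma /\
    EU pi p q i (upd sigma i y) < EU pi p q i (upd sigma i (sol i)).
Proof.
move=> Ui y_valid /ffun_neq_at[b y_b].
have sol_i : sol i = delegate_to e0 by rewrite /sol Ui.
rewrite sol_i ffunE in y_b.
have [k Uk ki] := exists_other_uninformed i.
have ie0 := uninformed_neq_e0 Ui; have ke0 := uninformed_neq_e0 Uk.
pose c := if y b is inl (Some c') then c' else true.
exists (challenge k c); split; first exact: challenge_valid.
pose s0 := [ffun j => if j == i then b else ~~ c].
have s0_gt0 : 0 < weight pi q (~~ c) s0.
  apply: weight_gt0 => // j; rewrite ffunE.
  by case: (eqVneq j i) => [-> _|_]; [exact: uninformed_q | rewrite eqxx].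
apply: (ltr_expected pi01 q01 _ s0_gt0).
  by move=> w s Hw; apply: sol_best_reply_at => // _; rewrite /challenge eqxx.
have s0_e0 : s0 e0 = ~~ c by rewrite ffunE eq_sym (negbTE ie0).
rewrite !utility_pr_win (uninformed_PI Ui) /=.
have fv_sol : final_vote (act_of (upd (challenge k c) i (sol i)) s0) i = Some (~~ c).
  apply: (@final_vote_inr _ _ _ e0); first by rewrite act_of_upd eqxx sol_i ffunE.
  by rewrite act_of_upd eq_sym (negbTE ie0) /challenge eqxx ffunE s0_e0.
have y_b_vote v : y b = inl v -> v != Some (~~ c).
  by rewrite /c => ->; case: v => [[]|].
have fv_y : final_vote (act_of (upd (challenge k c) i y) s0) i != Some (~~ c).
  have y_i : act_of (upd (challenge k c) i y) s0 i = y b.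
    by rewrite act_of_upd eqxx ffunE eqxx.
  case E: (y b) y_i y_b => [v|j] y_i y_b.
    by rewrite (final_vote_inl y_i) y_b_vote.
  have je0 : j != e0 by apply: contra y_b => /eqP ->.
  have ji : j != i := y_valid _ _ E.
  rewrite (final_vote_inr (v := if j == k then Some c else None) y_i); last first.
    by rewrite act_of_upd (negbTE ji) /challenge (negbTE je0) ffunE.
  by case: (j == k); rewrite //; case: (c).
apply: (@le_lt_trans _ _ 2^-1).
  rewrite pr_win_le_half // !votes_challenge // (negbTE fv_y) negbK.
  by case: (_ == _).
by rewrite pr_win_majority ?half_lt1 // !votes_challenge // fv_sol eqxx negbK; case: (c).
Qed.

Definition remaining k : restr N := iter k (elim_step pi p q) (@valid_restr N).

Lemma remaining_sub1 k i x : remaining k.+1 i x -> remaining 1 i x.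
Proof. by elim: k => [//|k IH] /= [/IH]. Qed.

Lemma remaining1_informed i x : ~~ uninformed i -> remaining 1 i x -> x = sol i.
Proof.
move=> Ii [x_valid x_undominated]; have [//|x_ne] := eqVneq x (sol i).
case: x_undominated; exists (sol i); split; first exact: sol_valid.
split; last exact: informed_strict_better.
by move=> sigma _; apply: sol_best_reply => Ui; rewrite Ui in Ii.
Qed.

Lemma remaining_e0 k (sigma : profile N) :
  in_restr (remaining k.+1) sigma -> sigma e0 = vote_favoured PI.
Proof.
move=> sigma_rem; rewrite -sol_e0.
exact: remaining1_informed e0_informed (remaining_sub1 (sigma_rem e0)).
Qed.

(* In round 1 nothing beats [sol i] strictly on every valid profile; from round 2
   on, the expert votes her signal, where [sol i] is a best reply. *)
Lemma sol_remaining k i : remaining k i (sol i).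
Proof.
elim: k i => [|k IH] i; first exact: sol_valid.
split; first exact: IH.
case=> y [y_rem [y_ge [sigma [sigma_rem y_gt]]]].
suff : EU pi p q i (upd sigma i y) <= EU pi p q i (upd sigma i (sol i)).
  by rewrite leNgt y_gt.
case: k IH y_rem y_ge sigma_rem => [|k] IH y_rem y_ge sigma_rem; last first.
  by apply: sol_best_reply => _; exact: remaining_e0 sigma_rem.
have [Ui|Ii] := boolP (uninformed i); last by apply: sol_best_reply => Ui; rewrite Ui in Ii.
have [->|y_ne] := eqVneq y (sol i); first exact: lexx.
have [tau [tau_valid sol_gt]] := uninformed_strict_better Ui y_rem y_ne.
by have := y_ge tau tau_valid; rewrite leNgt sol_gt.
Qed.

Lemma surviving_EU_sol i x (tau : profile N) :
  surviving pi p q i x -> in_restr (remaining 1) tau ->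
  EU pi p q i (upd tau i x) = EU pi p q i (upd tau i (sol i)).
Proof.
move=> x_surv tau_rem; have [_ x_undominated] := x_surv 2.
have sol_best (sigma : profile N) y : in_restr (remaining 1) sigma ->
    EU pi p q i (upd sigma i y) <= EU pi p q i (upd sigma i (sol i)).
  by move=> sigma_rem; apply: sol_best_reply => _; exact: (@remaining_e0 0).
apply/eqP; rewrite eq_le sol_best // leNgt; apply/negP => x_lt.
apply: x_undominated; exists (sol i); split; first exact: (sol_remaining 1).
by split; [move=> sigma; exact: sol_best | exists tau].
Qed.

Lemma surviving_prcorrect_sol i x (tau : profile N) :
  surviving pi p q i x -> in_restr (remaining 1) tau ->
  prcorrect pi q (upd tau i x) = prcorrect pi q (upd tau i (sol i)).
Proof.
move=> x_surv tau_rem; have [Ui|Ii] := boolP (uninformed i).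
  by have := surviving_EU_sol x_surv tau_rem; rewrite /EU (uninformed_PI Ui).
by rewrite (remaining1_informed Ii (x_surv 1)).
Qed.

Definition sol_prefix (sigma : profile N) m : profile N :=
  fun j => if (j < m)%N then sol j else sigma j.

Lemma sol_prefixS (sigma : profile N) m (lt_mN : (m < N)%N) :
  let im := Ordinal lt_mN in
  sol_prefix sigma m.+1 = upd (sol_prefix sigma m) im (sol im) /\
  sol_prefix sigma m = upd (sol_prefix sigma m) im (sigma im).
Proof.
move=> im; split; apply: functional_extensionality => j; rewrite /sol_prefix /upd.
  have [-> /=|ne_j] := eqVneq j im; first by rewrite ltnSn.
  by rewrite ltnS leq_eqVlt -[nat_of_ord j == m]/(j == im) (negbTE ne_j).
by have [->|//] := eqVneq j im; rewrite ltnn.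
Qed.

Lemma surviving_prcorrect (sigma : profile N) :
  in_restr (surviving pi p q) sigma -> prcorrect pi q sigma = prcorrect pi q sol.
Proof.
move=> sigma_surv.
have prefix_eq m : (m <= N)%N -> prcorrect pi q (sol_prefix sigma m) = prcorrect pi q sigma.
  elim: m => [|m IH] le_mN.
    by rewrite (_ : sol_prefix sigma 0 = sigma) //; apply: functional_extensionality.
  have [-> prefix_m] := sol_prefixS sigma le_mN.
  have prefix_rem : in_restr (remaining 1) (sol_prefix sigma m).
    move=> j; rewrite /sol_prefix.
    by case: ifP => _; [exact: (sol_remaining 1) | exact: sigma_surv].
  apply: (etrans _ (IH (ltnW le_mN))).
  have := surviving_prcorrect_sol (sigma_surv (Ordinal le_mN)) prefix_rem.
  by rewrite -prefix_m => <-.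
rewrite -(prefix_eq N) // (_ : sol_prefix sigma N = sol) //.
by apply: functional_extensionality => j; rewrite /sol_prefix ltn_ord.
Qed.

Hypothesis no_A_majority : (2 * nA p < N)%N.
Hypothesis no_B_majority : (2 * nB p < N)%N.

Lemma final_vote_sol w s : weight pi q w s != 0 ->
  forall j, final_vote (act_of sol s) j = Some (favoured (p j) w).
Proof.
move=> Hw j; have [Uj|Ij] := boolP (uninformed j); last first.
  by apply: final_vote_inl; rewrite /act_of (sol_informed_vote Ij Hw).
apply: (@final_vote_inr _ _ _ e0); first by rewrite /act_of /sol Uj ffunE.
by rewrite /act_of (sol_informed_vote e0_informed Hw) e0_PI (uninformed_PI Uj).
Qed.

Lemma sol_prcorrect : prcorrect pi q sol = 1.
Proof.
rewrite -(weight_sum pi q); apply: eq_bigr => w _; apply: eq_bigr => s _.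
have [W0|Hw] := eqVneq (weight pi q w s) 0; first by rewrite -/(weight pi q w s) W0 !mul0r.
rewrite utility_pr_win /= pr_win_majority ?mulr1 //.
have votesE c : votes (act_of sol s) c = #|[pred j | favoured (p j) w == c]|.
  by apply: eq_card => j; rewrite !inE (final_vote_sol Hw) (inj_eq Some_inj).
have votes_total : (votes (act_of sol s) (~~ w) + votes (act_of sol s) w = N)%N.
  rewrite !votesE -[RHS]card_ord -(cardC [pred j | favoured (p j) w == ~~ w]).
  by congr (_ + _)%N; apply: eq_card => j; rewrite !inE /=; case: (favoured _ _); case: (w).
have votes_against : (votes (act_of sol s) (~~ w) <= if w then nB p else nA p)%N.
  rewrite votesE; case: (w); apply: subset_leq_card; apply/subsetP => j;
    by rewrite !inE /=; case: (p j).
by case: (w) votes_total votes_against; lia.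
Qed.

End Game.

Theorem proposition5 (R : realFieldType) (N : nat) (pi : R)
  (p : 'I_N -> pref) (q : 'I_N -> R) :
  0 < pi < 1 ->
  (forall i, 2^-1 <= q i <= 1) ->
  (1 <= nE p q)%N ->
  (nE p q + ((nA p - nB p) + (nB p - nA p)) + 1 <= nU p q)%N ->
  (2 * maxn (nE p q + nA p) (nE p q + nB p) <= N)%N ->
  dominance_solvable pi p q /\
  (forall sigma, in_restr (surviving pi p q) sigma -> efficient pi q sigma).
Proof.
move=> pi01 q_ge_half nE_ge1 nU_large no_majority.
have q01 i : 0 < q i <= 1.
  by case/andP: (q_ge_half i) => /(lt_le_trans (half_gt0 R)) -> ->.
have [e0] : exists e0, e0 \in [pred i | if p i is PI then q i == 1 else false].
  by apply/card_gt0P.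
rewrite inE /=; case e0_PI: (p e0) => // /eqP e0_q1.
have two_uninformed : (1 < nU p q)%N by lia.
have no_A_majority : (2 * nA p < N)%N by move: (leq_maxl (nE p q + nA p) (nE p q + nB p)); lia.
have no_B_majority : (2 * nB p < N)%N by move: (leq_maxr (nE p q + nA p) (nE p q + nB p)); lia.
have surv_prcorrect1 sigma : in_restr (surviving pi p q) sigma -> prcorrect pi q sigma = 1.
  move=> sigma_surv; rewrite (surviving_prcorrect pi01 q01 e0_PI e0_q1 two_uninformed sigma_surv).
  exact: sol_prcorrect.
split; first split.
- by exists (sol p q e0) => j k; exact: sol_remaining.
- by move=> i sigma tau /surv_prcorrect1 + /surv_prcorrect1; exact: prcorrect1_expected_eq.
- by move=> sigma /surv_prcorrect1 prc1 tau _; rewrite prc1 prcorrect_le1.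
Qed.
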